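(* For every integer $m\ge1$, as formal power series in $q$, \[ \frac{1}{(q;q)_{\infty}} \sum_{l=0}^{m-1}(-1)^{l} q^{\frac{l(3l+1)}{2}}(1-q^{2l+1})= 1+(-1)^{m-1}\sum_{d=1}^{\infty} \frac{q^{d^2+d+\binom{m}{2}}}{(q;q)_{2d}} \frac{1-q^m}{1-q^d}\begin{bmatrix}2d\\ d+m\end{bmatrix}_q \] and \[ \frac{1}{(q;q)_{\infty}} \sum_{l=0}^{m-1}(-1)^{l} q^{\frac{l(3l-1)}{2}}(1-q^{4l+2})= 1+(-1)^{m-1}\sum_{d=1}^{\infty} \frac{q^{d^2+\binom{m}{2}}}{(q;q)_{2d}} \frac{1-q^m}{1-q^d}\begin{bmatrix}2d\\ d+m\end{bmatrix}_q. \]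
   Context: Notation: $(a;q)_n=(1-a)(1-aq)\cdots(1-aq^{n-1})$, $(a;q)_\infty=\prod_{k\ge0}(1-aq^k)$, and $\begin{bmatrix}n\\k\end{bmatrix}_q=\frac{(q;q)_n}{(q;q)_k(q;q)_{n-k}}$ for $n\ge k\ge0$ and $0$ otherwise (so terms with $d<m$ vanish). *)

From mathcomp Require Import all_boot all_order all_algebra.
Set Implicit Arguments. Unset Strict Implicit. Unset Printing Implicit Defensive.
Import Order.TTheory GRing.Theory Num.Theory.
Local Open Scope ring_scope.

Definition fps := nat -> rat.

Definition fps_const (c : rat) : fps := fun n => if n == 0%N then c else 0.
Definition fps_one : fps := fps_const 1.
Definition fps_add (f g : fps) : fps := fun n => f n + g n.
Definition fps_sub (f g : fps) : fps := fun n => f n - g n.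
Definition fps_scale (c : rat) (f : fps) : fps := fun n => c * f n.
Definition fps_mul (f g : fps) : fps :=
  fun n => \sum_(i < n.+1) f i * g (n - i)%N.
Definition fps_pow (f : fps) (k : nat) : fps := iter k (fps_mul f) fps_one.
Definition qX (k : nat) : fps := fun n => if n == k then 1 else 0.
Definition fps_bigsum (F : nat -> fps) (N : nat) : fps :=
  fun n => \sum_(i < N) F i n.

(* Multiplicative inverse of a power series with nonzero constant term:
   writing f = f0 (1 - g) with g(0) = 0, 1/f = f0^-1 * sum_k g^k, and the
   coefficient of q^n only involves k <= n. *)
Definition fps_inv (f : fps) : fps :=
  let g := fps_sub fps_one (fps_scale (f 0%N)^-1 f) in
  fun n => (f 0%N)^-1 * \sum_(k < n.+1) fps_pow g k n.
Definition fps_div (f g : fps) : fps := fps_mul f (fps_inv g).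

Definition qpoch (n : nat) : fps :=
  foldr fps_mul fps_one [seq fps_sub fps_one (qX k.+1) | k <- iota 0 n].

(* (q;q)_oo : the coefficient of q^n of the infinite product equals that of
   the partial product (q;q)_n, since the remaining factors are
   congruent to 1 modulo q^(n+1). *)
Definition qpoch_inf : fps := fun n => qpoch n n.

Definition qbinom (n k : nat) : fps :=
  if (k <= n)%N then fps_div (qpoch n) (fps_mul (qpoch k) (qpoch (n - k)))
  else fun _ => 0.

Definition fps_series (F : nat -> fps) (S : fps) : Prop :=
  forall n, exists N, forall M, (N <= M)%N -> fps_bigsum F M n = S n.

Definition lhs1 (m : nat) : fps :=
  fps_div (fps_bigsum (fun l => fps_scale ((-1) ^+ l)
             (fps_mul (qX ((l * (3 * l + 1))./2)) (fps_sub fps_one (qX (2 * l + 1))))) m)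
          qpoch_inf.
Definition lhs2 (m : nat) : fps :=
  fps_div (fps_bigsum (fun l => fps_scale ((-1) ^+ l)
             (fps_mul (qX ((l * (3 * l - 1))./2)) (fps_sub fps_one (qX (4 * l + 2))))) m)
          qpoch_inf.

Definition term1 (m d : nat) : fps :=
  fps_mul (fps_div (qX (d ^ 2 + d + 'C(m, 2))) (qpoch (2 * d)))
    (fps_mul (fps_div (fps_sub fps_one (qX m)) (fps_sub fps_one (qX d)))
             (qbinom (2 * d) (d + m))).
Definition term2 (m d : nat) : fps :=
  fps_mul (fps_div (qX (d ^ 2 + 'C(m, 2))) (qpoch (2 * d)))
    (fps_mul (fps_div (fps_sub fps_one (qX m)) (fps_sub fps_one (qX d)))
             (qbinom (2 * d) (d + m))).

(* Write T_m(d) for the d-th summand on the right, with e(d) = d^2 + d in the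
   first identity and e(d) = d^2 in the second.  Two consecutive summands
   combine into a single product,
     T_m(d) + T_(m+1)(d) = q^(e(d) + C(m,2)) (1 - q^(2m+1)) / ((q;q)_(d-m) (q;q)_(d+m+1)),
   except at m = d = 0, where the right-hand side is 1 and the left-hand side 0.
   After the shift d = a + m, the sum over d of the right-hand side is a Durfee
   rectangle series
     sum_a q^(a(a+k)) / ((q;q)_a (q;q)_(a+k)) = 1 / (q;q)_oo            (k = 2m+1)
   for e(d) = d^2 + d, and for e(d) = d^2 its variant with (q;q)_(a+k+1), whose
   sum is (1 + q^(k+1)) / (q;q)_oo (k = 2m).  Either way it is the l = m term of
   the left-hand side, so the alternating sum over l < m telescopes to the
   claim.  The Durfee identity is the limit M -> oo of its finite form
     sum_d q^(d(d+k)) (q^(M+1-d);q)_d / ((q;q)_d (q;q)_(d+k)) = 1 / (q;q)_(M+k),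
   which follows by induction on M from the q-Pascal rule. *)

From HB Require Import structures.
From mathcomp Require Import all_boot all_algebra.
From mathcomp Require Import boolp.
From mathcomp Require Import ring zify.
Set Implicit Arguments. Unset Strict Implicit. Unset Printing Implicit Defensive.
Import GRing.Theory.
Local Open Scope ring_scope.

(** * The ring of formal power series *)

HB.instance Definition _ := gen_eqMixin fps.
HB.instance Definition _ := gen_choiceMixin fps.

Lemma fps_addA : associative fps_add.
Proof. by move=> f g h; apply: funext => n; rewrite /fps_add addrA. Qed.

Lemma fps_addC : commutative fps_add.
Proof. by move=> f g; apply: funext => n; rewrite /fps_add addrC. Qed.

Lemma fps_add0 : left_id (fun=> 0) fps_add.
Proof. by move=> f; apply: funext => n; rewrite /fps_add add0r. Qed.

Lemma fps_addN : left_inverse (fun=> 0) (fun f n => - f n) fps_add.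
Proof. by move=> f; apply: funext => n; rewrite /fps_add addNr. Qed.

HB.instance Definition _ := GRing.isZmodule.Build fps fps_addA fps_addC fps_add0 fps_addN.

(* The ring laws of the Cauchy product are transported from {poly rat} along
   truncation. *)
Definition fps_trunc (N : nat) (f : fps) : {poly rat} := \poly_(i < N.+1) f i.

Lemma fps_mul_trunc N (f g : fps) j : (j <= N)%N ->
  fps_mul f g j = (fps_trunc N f * fps_trunc N g)`_j.
Proof.
move=> jN; rewrite coefM /fps_mul; apply: eq_bigr => i _.
have iN : (i <= N)%N by rewrite (leq_trans _ jN) // -ltnS.
by rewrite !coef_poly !ltnS iN (leq_trans (leq_subr _ _) jN).
Qed.

Lemma coefM_congr (R : nzSemiRingType) (p p' r r' : {poly R}) n :
  (forall i, (i <= n)%N -> p`_i = p'`_i) -> (forall i, (i <= n)%N -> r`_i = r'`_i) ->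
  (p * r)`_n = (p' * r')`_n.
Proof.
move=> pp' rr'; rewrite !coefM; apply: eq_bigr => i _.
by rewrite pp' ?rr' ?leq_subr // -ltnS.
Qed.

Lemma fps_trunc_coef N (f : fps) k : (k <= N)%N -> (fps_trunc N f)`_k = f k.
Proof. by move=> kN; rewrite coef_poly ltnS kN. Qed.

Lemma fps_mulA : associative fps_mul.
Proof.
move=> f g h; apply: funext => n.
rewrite [LHS](fps_mul_trunc _ _ (leqnn n)) [RHS](fps_mul_trunc _ _ (leqnn n)).
have trunc_mul F G i : (i <= n)%N ->
    (fps_trunc n (fps_mul F G))`_i = (fps_trunc n F * fps_trunc n G)`_i.
  move=> iN; rewrite fps_trunc_coef // (fps_mul_trunc _ _ iN).
  by apply: coefM_congr => k ki; rewrite !fps_trunc_coef // (leq_trans ki iN).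
transitivity ((fps_trunc n f * (fps_trunc n g * fps_trunc n h))`_n).
  by apply: coefM_congr => // i iN; rewrite trunc_mul.
by rewrite mulrA; apply: coefM_congr => // i iN; rewrite trunc_mul.
Qed.

Lemma fps_mulC : commutative fps_mul.
Proof.
move=> f g; apply: funext => n.
by rewrite (fps_mul_trunc _ _ (leqnn n)) [RHS](fps_mul_trunc _ _ (leqnn n)) mulrC.
Qed.

Lemma fps_trunc_one N : fps_trunc N fps_one = 1.
Proof. by apply/polyP => -[|i]; rewrite coef_poly coefC //=; case: ifP. Qed.

Lemma fps_mul1 : left_id fps_one fps_mul.
Proof.
move=> f; apply: funext => n; rewrite (fps_mul_trunc _ _ (leqnn n)) fps_trunc_one mul1r.
by rewrite coef_poly ltnS leqnn.
Qed.

Lemma fps_mulDl : left_distributive fps_mul fps_add.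
Proof.
move=> f g h; apply: funext => n; rewrite /fps_add /fps_mul -big_split /=.
by apply: eq_bigr => i _; rewrite mulrDl.
Qed.

Lemma fps_one_neq0 : fps_one != 0.
Proof. by apply/eqP => /(congr1 (fun f : fps => f 0%N)) /eqP; rewrite oner_eq0. Qed.

HB.instance Definition _ :=
  GRing.Zmodule_isComNzRing.Build fps fps_mulA fps_mulC fps_mul1 fps_mulDl fps_one_neq0.

Lemma fps_mulE : fps_mul = *%R. Proof. by []. Qed.
Lemma fps_subE (f g : fps) : fps_sub f g = f - g. Proof. by []. Qed.
Lemma fps_oneE : fps_one = 1. Proof. by []. Qed.

Lemma fps_coefD (f g : fps) n : (f + g) n = f n + g n. Proof. by []. Qed.
Lemma fps_coefN (f : fps) n : (- f) n = - f n. Proof. by []. Qed.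
Lemma fps_coefB (f g : fps) n : (f - g) n = f n - g n. Proof. by []. Qed.
Lemma fps_coef1 n : (1 : fps) n = (n == 0%N)%:R. Proof. by case: n. Qed.
Lemma fps_coefM (f g : fps) n : (f * g) n = \sum_(i < n.+1) f i * g (n - i)%N.
Proof. by []. Qed.
Lemma fps_coefM0 (f g : fps) : (f * g) 0%N = f 0%N * g 0%N.
Proof. by rewrite fps_coefM big_ord_recl big_ord0 addr0. Qed.
Lemma fps_coef_sum I (r : seq I) (P : pred I) (F : I -> fps) n :
  (\sum_(i <- r | P i) F i) n = \sum_(i <- r | P i) F i n.
Proof. by elim/big_rec2: _ => // i y1 y2 _ <-. Qed.

Definition eq_upto (n : nat) (f g : fps) := forall i, (i <= n)%N -> f i = g i.
Definition vanishes_below (a : nat) (f : fps) := forall i, (i < a)%N -> f i = 0.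

Lemma eq_uptoM n (f f' g g' : fps) :
  eq_upto n f f' -> eq_upto n g g' -> eq_upto n (f * g) (f' * g').
Proof.
move=> ff' gg' i iN; rewrite !fps_coefM; apply: eq_bigr => j _.
have jN : (j <= n)%N by rewrite (leq_trans _ iN) // -ltnS.
by rewrite ff' // gg' // (leq_trans (leq_subr _ _) iN).
Qed.

Lemma vanishes_eq_upto n (f g : fps) : vanishes_below n.+1 (f - g) <-> eq_upto n f g.
Proof.
split=> h i iN; first by apply/eqP; rewrite -subr_eq0 -fps_coefB h.
by rewrite fps_coefB h ?subrr.
Qed.

Lemma vanishes_below_le a b (f : fps) : (b <= a)%N -> vanishes_below a f -> vanishes_below b f.
Proof. by move=> ba fa i ib; rewrite fa // (leq_trans ib ba). Qed.

Lemma vanishes_belowD a (f g : fps) :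
  vanishes_below a f -> vanishes_below a g -> vanishes_below a (f + g).
Proof. by move=> fa ga i ia; rewrite fps_coefD fa ?ga ?addr0. Qed.

Lemma vanishes_below_sum a I (r : seq I) (P : pred I) (F : I -> fps) :
  (forall i, P i -> vanishes_below a (F i)) -> vanishes_below a (\sum_(i <- r | P i) F i).
Proof.
by move=> Fa; elim/big_rec: _ => // i x Pi xa; apply: vanishes_belowD => //; apply: Fa.
Qed.

Lemma vanishes_belowM a b (f g : fps) :
  vanishes_below a f -> vanishes_below b g -> vanishes_below (a + b) (f * g).
Proof.
move=> fa gb n nab; rewrite fps_coefM big1 // => i _.
have [ia | ai] := ltnP i a; first by rewrite fa ?mul0r.
by rewrite gb ?mulr0 //; have := ltn_ord i; lia.
Qed.

Lemma vanishes_belowMl a (f g : fps) : vanishes_below a g -> vanishes_below a (f * g).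
Proof. by move=> ga; rewrite -[a]add0n; apply: vanishes_belowM. Qed.

Lemma vanishes_belowMr a (f g : fps) : vanishes_below a f -> vanishes_below a (f * g).
Proof. by move=> fa; rewrite -[a]addn0; apply: vanishes_belowM. Qed.

Lemma vanishes_belowX a k (f : fps) : vanishes_below a f -> vanishes_below (a * k) (f ^+ k).
Proof.
move=> fa; elim: k => [|k ih]; first by rewrite muln0.
by rewrite exprS mulnS; apply: vanishes_belowM.
Qed.

Lemma qXE k n : qX k n = (n == k)%:R.
Proof. by rewrite /qX; case: (n == k). Qed.

Lemma vanishes_below_qX a : vanishes_below a (qX a).
Proof. by move=> i ia; rewrite qXE; case: eqP ia => // ->; rewrite ltnn. Qed.

Lemma vanishes_below_qXMr a k (f : fps) : (a <= k)%N -> vanishes_below a (qX k * f).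
Proof.
by move=> ak; apply: vanishes_belowMr; apply: vanishes_below_le ak (@vanishes_below_qX k).
Qed.

Lemma qXMl a (f : fps) n : (qX a * f) n = if (a <= n)%N then f (n - a)%N else 0.
Proof.
rewrite fps_coefM; case: (leqP a n) => [an | na].
  rewrite (bigD1 (Ordinal (an : a < n.+1)%N)) //= qXE eqxx mul1r big1 ?addr0 // => i ia.
  suff /negbTE ia' : (i : nat) != a by rewrite qXE ia' mul0r.
  by apply: contraNneq ia => ia; apply/eqP/val_inj.
rewrite big1 // => i _; suff /negbTE ia : (i : nat) != a by rewrite qXE ia mul0r.
by rewrite neq_ltn (leq_trans (ltn_ord i) na).
Qed.

Lemma qXD a b : qX (a + b) = qX a * qX b.
Proof.
apply: funext => n; rewrite qXMl !qXE.
by case: (leqP a n) => an; [case: eqP => e1|]; case: eqP => e2 //; exfalso; lia.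
Qed.

Lemma qX0 : qX 0 = 1.
Proof. by apply: funext => n; rewrite qXE fps_coef1. Qed.

Lemma qX_exp a : qX a = qX 1 ^+ a.
Proof. by elim: a => [|a ih]; rewrite ?qX0 // -[a.+1]addn1 qXD ih exprD. Qed.

Lemma fps_constMl c (f : fps) n : (fps_const c * f) n = c * f n.
Proof. by rewrite fps_coefM big_ord_recl /= subn0 big1 ?addr0 // => i _; rewrite mul0r. Qed.

Lemma fps_scaleE c (f : fps) : fps_scale c f = fps_const c * f.
Proof. by apply: funext => n; rewrite fps_constMl. Qed.

Lemma fps_constM a b : fps_const (a * b) = fps_const a * fps_const b.
Proof. by apply: funext => n; rewrite fps_constMl /fps_const; case: eqP; rewrite ?mulr0. Qed.

Lemma fps_const1 : fps_const 1 = 1.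
Proof. by apply: funext => n; rewrite fps_coef1 /fps_const; case: eqP. Qed.

Lemma fps_const_sign l : fps_const ((-1) ^+ l) = (-1) ^+ l.
Proof.
elim: l => [|l ih]; first by rewrite fps_const1.
rewrite !exprS fps_constM ih; congr (_ * _).
by apply: funext => -[|n]; rewrite /fps_const //= oppr0.
Qed.

Lemma fps_powE (f : fps) k : fps_pow f k = f ^+ k.
Proof. by elim: k => //= k ->; rewrite exprS. Qed.

Lemma fps_mulV (f : fps) : f 0%N != 0 -> fps_inv f * f = 1.
Proof.
set c := f 0%N => c0.
set g : fps := 1 - fps_const c^-1 * f.
have g1 : vanishes_below 1 g.
  by move=> [|//] _; rewrite /g fps_coefB fps_constMl fps_coef1 mulVf // subrr.
have f_g : f = fps_const c * (1 - g).
  by rewrite opprB addrC subrK mulrA -fps_constM divff // fps_const1 mul1r.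
apply: funext => n; set G := \sum_(k < n.+1) g ^+ k.
have inv_trunc : eq_upto n (fps_inv f) (fps_const c^-1 * G).
  move=> i iN; rewrite fps_constMl /G fps_coef_sum /fps_inv -/c; congr (_ * _).
  have -> : fps_sub fps_one (fps_scale c^-1 f) = g by rewrite fps_scaleE.
  rewrite (big_ord_widen n.+1 (fun k => fps_pow g k i)) ?ltnS //.
  rewrite [RHS](bigID (fun k : 'I_n.+1 => (k < i.+1)%N)) /= [X in _ = _ + X]big1 ?addr0.
    by apply: eq_bigr => k _; rewrite fps_powE.
  by move=> k; rewrite -leqNgt => ik; rewrite (vanishes_belowX (k:=k) g1) // mul1n.
rewrite (eq_uptoM inv_trunc (fun i _ => erefl (f i))) //.
have -> : fps_const c^-1 * G * f = 1 - g ^+ n.+1.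
  transitivity (fps_const c^-1 * fps_const c * ((1 - g) * G)); first by rewrite f_g; ring.
  by rewrite -fps_constM mulVf // fps_const1 mul1r -opprB mulNr -subrX1 opprB.
by rewrite fps_coefB (vanishes_belowX (k:=n.+1) g1) ?mul1n // subr0.
Qed.

Definition fps_unit : {pred fps} := fun f => f 0%N != 0.
Definition fps_invr (f : fps) : fps := if f 0%N != 0 then fps_inv f else f.

Lemma fps_mulVr : {in fps_unit, left_inverse 1 fps_invr *%R}.
Proof. by move=> f f0; rewrite /fps_invr ifT ?fps_mulV. Qed.

Lemma fps_unitPl (f g : fps) : g * f = 1 -> fps_unit f.
Proof.
move=> /(congr1 (fun h : fps => h 0%N)); rewrite fps_coefM0 fps_coef1 /= => gf1.
by apply/eqP => f0; move: gf1; rewrite f0 mulr0 => /eqP; rewrite eq_sym oner_eq0.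
Qed.

Lemma fps_invr_out : {in [predC fps_unit], fps_invr =1 id}.
Proof. by move=> f; rewrite inE /fps_invr => /negbTE f0; rewrite ifF. Qed.

HB.instance Definition _ :=
  GRing.ComNzRing_hasMulInverse.Build fps fps_mulVr fps_unitPl fps_invr_out.

Lemma fps_unitE (f : fps) : (f \is a GRing.unit) = (f 0%N != 0).
Proof. by []. Qed.

Lemma fps_divE (f g : fps) : g 0%N != 0 -> fps_div f g = f / g.
Proof. by move=> g0; rewrite /fps_div /GRing.inv /= /fps_invr g0. Qed.

Lemma eq_upto_inv n (f g : fps) : f \is a GRing.unit -> g \is a GRing.unit ->
  eq_upto n f g -> eq_upto n f^-1 g^-1.
Proof.
move=> fU gU /vanishes_eq_upto fg; apply/vanishes_eq_upto.
have -> : f^-1 - g^-1 = f^-1 * g^-1 * (g - f).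
  by rewrite mulrBr -mulrA mulVr // mulr1 mulrAC mulVr // mul1r.
apply: vanishes_belowMl => i ni; rewrite -opprB fps_coefN fg // oppr0.
Qed.

(** * q-Pochhammer symbols *)

Lemma qpochE n : qpoch n = \prod_(k < n) (1 - qX k.+1).
Proof.
rewrite /qpoch fps_oneE fps_mulE.
by rewrite foldrE big_map -(big_mkord xpredT (fun k => 1 - qX k.+1)) /index_iota subn0.
Qed.

Lemma qpoch0 : qpoch 0 = 1.
Proof. by rewrite qpochE big_ord0. Qed.

Lemma qpochS n : qpoch n.+1 = qpoch n * (1 - qX n.+1).
Proof. by rewrite !qpochE big_ord_recr. Qed.

Lemma oneBqX_coef0 k : (0 < k)%N -> (1 - qX k) 0%N = 1.
Proof. by case: k => // k _; rewrite fps_coefB fps_coef1 qXE subr0. Qed.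

Lemma oneBqX_unit k : (0 < k)%N -> 1 - qX k \is a GRing.unit.
Proof. by move=> k0; rewrite fps_unitE oneBqX_coef0 ?oner_eq0. Qed.

Lemma qpoch_coef0 n : qpoch n 0%N = 1.
Proof.
elim: n => [|n ih]; first by rewrite qpoch0.
by rewrite qpochS fps_coefM0 ih oneBqX_coef0 // mulr1.
Qed.

Lemma qpoch_unit n : qpoch n \is a GRing.unit.
Proof. by rewrite fps_unitE qpoch_coef0 oner_eq0. Qed.

Lemma qpochVS n : (qpoch n)^-1 = (1 - qX n.+1) * (qpoch n.+1)^-1.
Proof.
by rewrite qpochS invrM ?qpoch_unit ?oneBqX_unit // mulrA divrr ?oneBqX_unit ?mul1r.
Qed.

Lemma eq_upto_qpoch n N : (n <= N)%N -> eq_upto n (qpoch N) (qpoch n).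
Proof.
elim: N => [|N ih]; first by rewrite leqn0 => /eqP ->.
rewrite leq_eqVlt => /orP [/eqP -> // | nN] i iN.
rewrite -ih // qpochS mulrBr mulr1 fps_coefB.
by rewrite (vanishes_belowMl _ (@vanishes_below_qX N.+1)) ?subr0 // (leq_ltn_trans iN).
Qed.

Lemma qpoch_inf_unit : qpoch_inf \is a GRing.unit.
Proof. by rewrite fps_unitE /qpoch_inf qpoch_coef0 oner_eq0. Qed.

Lemma eq_upto_qpoch_inf n N : (n <= N)%N -> eq_upto n qpoch_inf (qpoch N).
Proof. by move=> nN i iN; rewrite /qpoch_inf (eq_upto_qpoch (leq_trans iN nN) (leqnn i)). Qed.

(** * Summable families *)

Definition summable (F : nat -> fps) := forall d, vanishes_below d (F d).

(* Only the first n+1 terms of a summable family contribute to q^n. *)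
Definition fps_infsum (F : nat -> fps) : fps := fun n => \sum_(d < n.+1) F d n.

Lemma fps_infsum_trunc F n N : summable F -> (n < N)%N ->
  fps_infsum F n = (\sum_(d < N) F d) n.
Proof.
move=> sF nN; rewrite fps_coef_sum /fps_infsum (big_ord_widen N (fun d => F d n)) //.
rewrite [RHS](bigID (fun d : 'I_N => (d < n.+1)%N)) /= [X in _ = _ + X]big1 ?addr0 //.
by move=> d; rewrite -leqNgt; apply: sF.
Qed.

Lemma eq_fps_infsum F G : F =1 G -> fps_infsum F = fps_infsum G.
Proof. by move=> FG; apply: funext => n; apply: eq_bigr => d _; rewrite FG. Qed.

Lemma fps_infsumD F G : fps_infsum (fun d => F d + G d) = fps_infsum F + fps_infsum G.
Proof. by apply: funext => n; rewrite fps_coefD /fps_infsum -big_split. Qed.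

Lemma fps_infsumMl (c : fps) F : summable F ->
  fps_infsum (fun d => c * F d) = c * fps_infsum F.
Proof.
move=> sF; apply: funext => n.
have trunc : eq_upto n (fps_infsum F) (\sum_(d < n.+1) F d).
  by move=> i iN; apply: fps_infsum_trunc.
by rewrite (eq_uptoM (fun i _ => erefl (c i)) trunc (leqnn n)) mulr_sumr fps_coef_sum.
Qed.

Lemma fps_infsum_shift F m : summable F -> (forall d, (d < m)%N -> F d = 0) ->
  fps_infsum F = fps_infsum (fun a => F (a + m)%N).
Proof.
move=> sF F0; apply: funext => n; rewrite (@fps_infsum_trunc F n (m + n.+1)) ?ltn_addl //.
rewrite big_split_ord /= big1 ?add0r => [|i _]; last by rewrite F0.
by rewrite fps_coef_sum; apply: eq_bigr => i _; rewrite addnC.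
Qed.

Lemma fps_infsum_delta0 (c : fps) : fps_infsum (fun d => if d == 0%N then c else 0) = c.
Proof. by apply: funext => n; rewrite /fps_infsum big_ord_recl /= big1 ?addr0. Qed.

Lemma fps_infsum0 : fps_infsum (fun=> 0) = 0.
Proof. by apply: funext => n; rewrite /fps_infsum big1. Qed.

(** * The Durfee rectangle identity *)

(* [qfalling M d] is (q^(M+1-d);q)_d = (q;q)_M / (q;q)_(M-d). *)
Definition qfalling (M d : nat) : fps := \prod_(M.+1 - d <= j < M.+1) (1 - qX j).

Lemma qfalling0 M : qfalling M 0 = 1.
Proof. by rewrite /qfalling subn0 big_geq. Qed.

Lemma qfalling_over M : qfalling M M.+1 = 0.
Proof. by rewrite /qfalling subnn big_nat_recl // qX0 subrr mul0r. Qed.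

Lemma qfalling_pascal M e : (e <= M)%N ->
  qfalling M.+1 e.+1 = qX e.+1 * qfalling M e.+1 + (1 - qX e.+1) * qfalling M e.
Proof.
move=> eM; have lower : qfalling M e.+1 = (1 - qX (M - e)) * qfalling M e.
  rewrite /qfalling big_ltn; last by lia.
  by have -> : (M.+1 - e.+1).+1 = (M.+1 - e)%N by lia.
have upper : qfalling M.+1 e.+1 = qfalling M e * (1 - qX M.+1).
  by rewrite /qfalling subSS big_nat_recr //= leq_subr.
rewrite upper lower.
have -> : qX M.+1 = qX e.+1 * qX (M - e) by rewrite -qXD; congr qX; lia.
by ring.
Qed.

Lemma vanishes_below_oneBprod a (r : seq nat) (F : nat -> fps) :
  (forall i, i \in r -> vanishes_below a (1 - F i)) ->
  vanishes_below a (1 - \prod_(i <- r) F i).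
Proof.
move=> Fa; rewrite big_seq; elim/big_rec: _ => [|i x ri xa]; first by rewrite subrr.
have -> : 1 - F i * x = (1 - F i) + F i * (1 - x) by ring.
by apply: vanishes_belowD; [apply: Fa | apply: vanishes_belowMl].
Qed.

Lemma vanishes_below_oneBqfalling M d : vanishes_below (M.+1 - d) (1 - qfalling M d).
Proof.
apply: vanishes_below_oneBprod => j; rewrite mem_index_iota => /andP [dj _].
by rewrite opprB addrC subrK; apply: (vanishes_below_le dj); apply: vanishes_below_qX.
Qed.

Definition durfee_term (k d : nat) : fps :=
  qX (d * (d + k)) * (qpoch d)^-1 * (qpoch (d + k))^-1.

Lemma durfee_finite k M :
  \sum_(d < M.+1) durfee_term k d * qfalling M d = (qpoch (M + k))^-1.
Proof.
elim: M k => [|M ih] k.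
  by rewrite big_ord_recl big_ord0 /durfee_term qfalling0 qX0 qpoch0 invr1 !mul1r !mulr1 addr0.
rewrite addSnnS -ih.
pose A d := durfee_term k.+1 d * qfalling M d.
pose B d := qX (d + k.+1) * A d.
have A_top : A M.+1 = 0 by rewrite /A qfalling_over mulr0.
have B_top : B M.+1 = 0 by rewrite /B A_top mulr0.
have split_term (d : 'I_M.+2) : durfee_term k d * qfalling M.+1 d =
    A d - B d + (if val d is e.+1 then B e else 0).
  case: d => [[|e] eM] /=.
    rewrite /B /A /durfee_term !qfalling0 !add0n mul0n qX0 qpoch0 invr1 (qpochVS k); ring.
  rewrite qfalling_pascal; last by lia.
  rewrite /B /A /durfee_term -!addSnnS (qpochVS e) (qpochVS (e.+1 + k)).
  have -> : (e.+1 * (e.+1 + k).+1 = e.+1 * (e.+1 + k) + e.+1)%N by lia.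
  have -> : (e.+1 * (e.+1 + k) = e.+1 + k + e * (e.+1 + k))%N by lia.
  by rewrite !qXD; ring.
rewrite (eq_bigr _ (fun d _ => split_term d)) big_split /= [X in _ + X]big_ord_recl /= add0r.
by rewrite sumrB big_ord_recr [in X in _ - X]big_ord_recr /= A_top B_top !addr0 subrK.
Qed.

Lemma leq_mul_addr d k : (d <= d * (d + k))%N.
Proof. by case: d => // d; rewrite leq_pmulr. Qed.

Lemma summable_durfee_term k : summable (durfee_term k).
Proof.
by move=> d; rewrite /durfee_term -mulrA; apply: vanishes_below_qXMr (leq_mul_addr d k).
Qed.

Lemma durfee k : fps_infsum (durfee_term k) = qpoch_inf^-1.
Proof.
apply: funext => n; rewrite (fps_infsum_trunc (@summable_durfee_term k) (ltnSn n)).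
have finite_trunc : eq_upto n (\sum_(d < n.+1) durfee_term k d) (qpoch (n + k))^-1.
  apply/vanishes_eq_upto; rewrite -durfee_finite -sumrB; apply: vanishes_below_sum => d _.
  have -> : durfee_term k d - durfee_term k d * qfalling n d =
      qX (d * (d + k)) * (1 - qfalling n d) * ((qpoch d)^-1 * (qpoch (d + k))^-1).
    by rewrite /durfee_term; ring.
  apply: vanishes_belowMr; apply: vanishes_below_le (vanishes_belowM
    (@vanishes_below_qX _) (@vanishes_below_oneBqfalling n d)).
  by have := leq_mul_addr d k; have := ltn_ord d; lia.
rewrite finite_trunc //; apply: (eq_upto_inv (qpoch_unit _) qpoch_inf_unit _ (leqnn n)).
by move=> i iN; rewrite (eq_upto_qpoch_inf (leq_addr k n) iN).
Qed.

Lemma durfee_succ k :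
  fps_infsum (fun d => qX (d * (d + k)) * (qpoch d)^-1 * (qpoch (d + k).+1)^-1)
  = (1 + qX k.+1) / qpoch_inf.
Proof.
have split_term d : qX (d * (d + k)) * (qpoch d)^-1 * (qpoch (d + k).+1)^-1 =
    durfee_term k d + qX k.+1 * durfee_term k.+1 d.
  rewrite /durfee_term (qpochVS (d + k)) -addnS.
  have -> : (d * (d + k.+1) = d * (d + k) + d)%N by rewrite addnS mulnS addnC.
  rewrite !qXD addnS; ring.
rewrite (eq_fps_infsum split_term) fps_infsumD.
by rewrite (fps_infsumMl _ (@summable_durfee_term k.+1)) !durfee; ring.
Qed.

(** * Consecutive summands *)

Section Summands.

Variable e : nat -> nat.

(* At d = 0 the factor (1 - qX d)^-1 is the junk inverse of 0, but then either
   m > d or the factor 1 - qX m is 0. *)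
Definition summand (m d : nat) : fps :=
  if (m <= d)%N then
    qX (e d + 'C(m, 2)) * (1 - qX m) * (1 - qX d)^-1 * (qpoch (d + m))^-1 * (qpoch (d - m))^-1
  else 0.

Definition pair_summand (m d : nat) : fps :=
  if (m <= d)%N then
    qX (e d + 'C(m, 2)) * (1 - qX (m + m).+1) * (qpoch (d - m))^-1 * (qpoch (d + m).+1)^-1
  else 0.

Lemma summand0 d : summand 0 d = 0.
Proof. by rewrite /summand qX0 subrr mulr0 !mul0r. Qed.

Lemma summand_pair m d : (0 < m + d)%N -> summand m d + summand m.+1 d = pair_summand m d.
Proof.
move=> md0; rewrite /summand /pair_summand; case: (ltnP d m) => [dm | md].
  by rewrite !ifF ?addr0 //; apply/negbTE; rewrite -ltnNge // ltnS ltnW.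
case: (eqVneq d m) md0 => [-> | dm] md0.
  rewrite ifF ?addr0 ?ltnn // subnn (qpochVS (m + m)) mulrK ?oneBqX_unit //; last by lia.
  by ring.
(* Clearing denominators: (1 - q^m)(1 - q^(d+m+1)) + q^m (1 - q^(m+1))(1 - q^(d-m))
   = (1 - q^d)(1 - q^(2m+1)). *)
have [a ->] : exists a, d = (m.+1 + a)%N by exists (d - m.+1)%N; lia.
rewrite ifT ?leq_addr //.
have -> : (m.+1 + a - m = a.+1)%N by lia.
have -> : (m.+1 + a - m.+1 = a)%N by lia.
have -> : (m.+1 + a + m.+1 = (m.+1 + a + m).+1)%N by lia.
rewrite binS bin1 addnA (qXD _ m) (qpochVS a) (qpochVS (m.+1 + a + m)).
set w := (1 - qX (m.+1 + a))^-1.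
have ww (Z : fps) : Z = (1 - qX (m.+1 + a)) * w * Z by rewrite divrr ?oneBqX_unit ?mul1r.
rewrite [RHS]ww (qX_exp m.+1) !(qX_exp (m.+1 + a)) (qX_exp (m + m).+1).
rewrite (qX_exp (m.+1 + a + m).+1) (qX_exp a.+1) !(qX_exp m).
by rewrite ?exprD ?exprS ?exprD ?exprS; ring.
Qed.

Hypothesis e0 : e 0 = 0%N.

Lemma pair_summand_split m d : pair_summand m d =
  summand m d + summand m.+1 d + (if d == 0%N then (m == 0%N)%:R else 0).
Proof.
case: d => [|d]; last by rewrite summand_pair ?addnS // addr0.
case: m => [|m]; last by rewrite summand_pair ?addn0 // addr0.
rewrite summand0 /summand /pair_summand /= e0 !add0n subnn qX0 qpochS qpoch0 invr1.
by rewrite !mul1r mulr1 divrr ?oneBqX_unit ?add0r.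
Qed.

Lemma fps_infsum_pair_summand_split m : fps_infsum (pair_summand m) =
  fps_infsum (summand m) + fps_infsum (summand m.+1) + (m == 0%N)%:R.
Proof. by rewrite (eq_fps_infsum (pair_summand_split m)) !fps_infsumD fps_infsum_delta0. Qed.

Lemma alternating_pair_summands m :
  \sum_(l < m.+1) (-1) ^+ l * fps_infsum (pair_summand l) =
  1 + (-1) ^+ m * fps_infsum (summand m.+1).
Proof.
elim: m => [|m ih].
  rewrite big_ord1 /= fps_infsum_pair_summand_split (eq_fps_infsum summand0) fps_infsum0.
  by rewrite !mul1r add0r addrC.
by rewrite big_ord_recr /= ih fps_infsum_pair_summand_split /= exprS; ring.
Qed.

Hypothesis le_e : forall d, (d <= e d)%N.

Lemma summable_summand m : summable (summand m).
Proof.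
move=> d; rewrite /summand; case: ifP => // _; rewrite -!mulrA.
by apply: vanishes_below_qXMr; rewrite (leq_trans (le_e d)) ?leq_addr.
Qed.

Lemma summable_pair_summand m : summable (pair_summand m).
Proof.
move=> d; rewrite /pair_summand; case: ifP => // _; rewrite -!mulrA.
by apply: vanishes_below_qXMr; rewrite (leq_trans (le_e d)) ?leq_addr.
Qed.

Lemma fps_series_summand m : (1 <= m)%N ->
  fps_series (fun d => summand m d.+1) (fps_infsum (summand m)).
Proof.
move=> m1 n; exists n => M nM.
rewrite (fps_infsum_trunc (@summable_summand m) (_ : n < M.+1)%N) ?ltnS //.
rewrite fps_coef_sum big_ord_recl /= [summand m 0]/summand ifF ?add0r; last by lia.
by rewrite /fps_bigsum; apply: eq_bigr.
Qed.

Lemma fps_infsum_pair_summand_shift m : fps_infsum (pair_summand m) =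
  fps_infsum (fun a => qX (e (a + m) + 'C(m, 2)) * (1 - qX (m + m).+1) *
                       (qpoch a)^-1 * (qpoch (a + m + m).+1)^-1).
Proof.
rewrite (@fps_infsum_shift _ m (@summable_pair_summand m)); last first.
  by move=> d dm; rewrite /pair_summand ifF //; apply/negbTE; rewrite -ltnNge.
by apply: eq_fps_infsum => a; rewrite /pair_summand leq_addl addnK -addnA.
Qed.

End Summands.

(** * The two identities *)

Lemma fps_infsum_pair_summand1 m :
  fps_infsum (pair_summand (fun d => d ^ 2 + d)%N m) =
  qX (m ^ 2 + m + 'C(m, 2)) * (1 - qX (m + m).+1) / qpoch_inf.
Proof.
rewrite (fps_infsum_pair_summand_shift _ m); last by move=> d; lia.
rewrite -(durfee (m + m).+1) -(fps_infsumMl _ (@summable_durfee_term _)).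
apply: eq_fps_infsum => a; rewrite /durfee_term.
have -> : ((a + m) ^ 2 + (a + m) + 'C(m, 2) =
  m ^ 2 + m + 'C(m, 2) + a * (a + (m + m).+1))%N by nia.
have -> : (a + (m + m).+1 = (a + m + m).+1)%N by lia.
by rewrite qXD; ring.
Qed.

Lemma fps_infsum_pair_summand2 m :
  fps_infsum (pair_summand (fun d => d ^ 2)%N m) =
  qX (m ^ 2 + 'C(m, 2)) * (1 - qX (m + m).+1) * (1 + qX (m + m).+1) / qpoch_inf.
Proof.
rewrite (fps_infsum_pair_summand_shift _ m); last by move=> d; nia.
rewrite -mulrA -(durfee_succ (m + m)) -fps_infsumMl; last first.
  by move=> d; rewrite -mulrA; apply: vanishes_below_qXMr (leq_mul_addr d _).
apply: eq_fps_infsum => a.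
have -> : ((a + m) ^ 2 + 'C(m, 2) = m ^ 2 + 'C(m, 2) + a * (a + (m + m)))%N by nia.
by rewrite qXD addnA; ring.
Qed.

Lemma summandE e m d : (1 <= m)%N ->
  fps_mul (fps_div (qX (e d + 'C(m, 2))) (qpoch (2 * d)))
    (fps_mul (fps_div (fps_sub fps_one (qX m)) (fps_sub fps_one (qX d)))
             (qbinom (2 * d) (d + m))) = summand e m d.
Proof.
move=> m1; rewrite /qbinom /summand; case: (leqP m d) => [md | dm]; last first.
  rewrite ifF; last by lia.
  apply: funext => n; rewrite /fps_mul big1 // => i _.
  by rewrite big1 ?mulr0 // => j _; rewrite mulr0.
rewrite ifT; last by lia.
rewrite !fps_mulE !fps_subE fps_oneE.
rewrite !fps_divE ?fps_coefM0 ?qpoch_coef0 ?oneBqX_coef0 ?mulr1 ?oner_eq0 //; last by lia.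
have -> : (2 * d - (d + m) = d - m)%N by lia.
have cancel2d (Z : fps) : Z = (qpoch (2 * d))^-1 * qpoch (2 * d) * Z.
  by rewrite mulVr ?qpoch_unit ?mul1r.
by rewrite invrM ?qpoch_unit // [RHS]cancel2d; ring.
Qed.

Lemma fps_div_alternating_sum (a b : nat -> nat) m :
  fps_div (fps_bigsum (fun l => fps_scale ((-1) ^+ l)
                        (fps_mul (qX (a l)) (fps_sub fps_one (qX (b l))))) m) qpoch_inf =
  \sum_(l < m) (-1) ^+ l * (qX (a l) * (1 - qX (b l)) / qpoch_inf).
Proof.
rewrite fps_divE ?qpoch_coef0 ?oner_eq0 //.
have -> : fps_bigsum (fun l => fps_scale ((-1) ^+ l)
            (fps_mul (qX (a l)) (fps_sub fps_one (qX (b l))))) m =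
          \sum_(l < m) (-1) ^+ l * (qX (a l) * (1 - qX (b l))).
  apply: funext => n; rewrite fps_coef_sum; apply: eq_bigr => l _.
  by rewrite fps_scaleE fps_const_sign.
by rewrite mulr_suml; apply: eq_bigr => l _; rewrite [RHS]mulrA.
Qed.

Lemma half_pentagonal_plus l : ((l * (3 * l + 1))./2 = l ^ 2 + l + 'C(l, 2))%N.
Proof.
have -> : (l * (3 * l + 1) = (l ^ 2 + l).*2 + l * l.-1)%N by rewrite -mul2n; case: l => //= l; nia.
by rewrite halfD odd_double doubleK bin2.
Qed.

Lemma half_pentagonal_minus l : ((l * (3 * l - 1))./2 = l ^ 2 + 'C(l, 2))%N.
Proof.
have -> : (l * (3 * l - 1) = (l ^ 2).*2 + l * l.-1)%N by rewrite -mul2n; case: l => //= l; nia.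
by rewrite halfD odd_double doubleK bin2.
Qed.

Lemma lhs1E m :
  lhs1 m = \sum_(l < m) (-1) ^+ l * fps_infsum (pair_summand (fun d => d ^ 2 + d)%N l).
Proof.
rewrite /lhs1 fps_div_alternating_sum; apply: eq_bigr => l _.
by rewrite fps_infsum_pair_summand1 half_pentagonal_plus (_ : 2 * l + 1 = (l + l).+1)%N //; lia.
Qed.

Lemma lhs2E m :
  lhs2 m = \sum_(l < m) (-1) ^+ l * fps_infsum (pair_summand (fun d => d ^ 2)%N l).
Proof.
rewrite /lhs2 fps_div_alternating_sum; apply: eq_bigr => l _.
rewrite fps_infsum_pair_summand2 half_pentagonal_minus.
by rewrite (_ : 4 * l + 2 = (l + l).+1 + (l + l).+1)%N ?qXD; [ring | lia].
Qed.

Theorem corollary1p3 (m : nat) (hm : (1 <= m)%N) :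
  (exists S : fps, fps_series (fun d => term1 m d.+1) S /\
     lhs1 m = fps_add fps_one (fps_scale ((-1) ^+ (m - 1)) S)) /\
  (exists S : fps, fps_series (fun d => term2 m d.+1) S /\
     lhs2 m = fps_add fps_one (fps_scale ((-1) ^+ (m - 1)) S)).
Proof.
case: m hm => [//|m] _; split.
  exists (fps_infsum (summand (fun d => d ^ 2 + d)%N m.+1)); split.
    rewrite (_ : (fun d => _) = (fun d => summand (fun d => d ^ 2 + d)%N m.+1 d.+1)).
      by apply: fps_series_summand => // d; lia.
    by apply: funext => d; rewrite /term1 summandE.
  by rewrite lhs1E alternating_pair_summands // fps_scaleE fps_const_sign subn1.
exists (fps_infsum (summand (fun d => d ^ 2)%N m.+1)); split.
  rewrite (_ : (fun d => _) = (fun d => summand (fun d => d ^ 2)%N m.+1 d.+1)).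
    by apply: fps_series_summand => // d; nia.
  by apply: funext => d; rewrite /term2 summandE.
by rewrite lhs2E alternating_pair_summands // fps_scaleE fps_const_sign subn1.
Qed.
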